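(* Let $H=(V,\mathcal E)$ be a finite hypergraph with nonnegative hyperedge weights $w_e$ and total weight $W=\sum_e w_e$. For $K\subseteq V$ let $W(K)=\sum_{e\in\mathcal E:\,e\subseteq K}w_e$, and for $\lambda\ge0$ let $\Phi(K,\lambda)=|K|-\lambda W(K)$. Let $\tau\in[0,1]$ and consider the linear program \[\min \sum_{v\in V}x_v \quad\text{s.t.}\quad z_e\le x_v\ \ \forall e\in\mathcal E,\ \forall v\in e;\qquad \sum_{e}w_e z_e\ge \tau W;\qquad 0\le x_v,z_e\le 1.\] Then there exist $\lambda^*\ge0$ and vertex sets $S^-\subseteq S^+\subseteq V$ such that (1) both $S^-$ and $S^+$ minimize $\Phi(\cdot,\lambda^* )$ over all subsets of $V$, and (2) there is $\alpha\in[0,1]$ such that $x^*=(1-\alpha)\mathbf 1_{S^-}+\alpha\mathbf 1_{S^+}$, together with $z^*_e=(1-\alpha)\mathbf 1[e\subseteq S^-]+\alpha\mathbf 1[e\subseteq S^+]$, is an optimal solution of the linear program satisfying the constraint $\sum_e w_e z^*_e\ge\tau W$.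
   Context: $\mathbf 1_S$ denotes the indicator vector of $S\subseteq V$. *)

From mathcomp Require Import all_boot all_order all_algebra.
From mathcomp Require Import reals.
Set Implicit Arguments. Unset Strict Implicit. Unset Printing Implicit Defensive.
Import Order.TTheory GRing.Theory Num.Theory.
Local Open Scope ring_scope.

Definition totW (R : realType) (V : finType) (E : {set {set V}}) (w : {set V} -> R) : R :=
  \sum_(e in E) w e.

Definition WK (R : realType) (V : finType) (E : {set {set V}}) (w : {set V} -> R)
  (K : {set V}) : R :=
  \sum_(e in E | e \subset K) w e.

Definition Phi (R : realType) (V : finType) (E : {set {set V}}) (w : {set V} -> R)
  (K : {set V}) (lam : R) : R :=
  (#|K|%:R - lam * WK E w K).

Definition lp_feasible (R : realType) (V : finType) (E : {set {set V}}) (w : {set V} -> R)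
  (tau : R) (x : V -> R) (z : {set V} -> R) : Prop :=
  [/\ (forall e, e \in E -> forall v, v \in e -> z e <= x v),
      tau * totW E w <= \sum_(e in E) w e * z e,
      (forall v, 0 <= x v <= 1) &
      (forall e, e \in E -> 0 <= z e <= 1)].

Definition lp_optimal (R : realType) (V : finType) (E : {set {set V}}) (w : {set V} -> R)
  (tau : R) (x : V -> R) (z : {set V} -> R) : Prop :=
  lp_feasible E w tau x z /\
  forall x' z', lp_feasible E w tau x' z' -> \sum_(v : V) x v <= \sum_(v : V) x' v.

Definition ind (R : realType) (b : bool) : R := if b then 1 else 0.

(* For λ ≥ 0 and any feasible (x, z), peeling off the level sets of x writes
   x as a convex combination of indicators of vertex sets, which gives
   Σ x - λ Σ w z ≥ min_K Φ(K, λ), hence Σ x ≥ min_K Φ(K, λ) + λ τW.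
   As a function of λ the right-hand side is the lower envelope of the lines
   λ ↦ |K| + λ (τW - W(K)).  At a maximiser λ0 of this envelope on [0, ∞) some
   Φ(·, λ0)-minimiser K2 has W(K2) ≥ τW and, unless λ0 = 0, some minimiser K1
   has W(K1) ≤ τW.  Since Φ(·, λ0) is submodular, S- = K1 ∩ K2 and S+ = K1 ∪ K2
   are minimisers as well, and mixing their indicators so that the covered
   weight is max (W(S-), τW) attains the lower bound. *)

From mathcomp Require Import all_boot all_order all_algebra reals ring lra.
Set Implicit Arguments. Unset Strict Implicit. Unset Printing Implicit Defensive.
Import Order.TTheory GRing.Theory Num.Theory.
Local Open Scope ring_scope.

Lemma convex_interval (R : realType) (x y c : R) :
  x <= c <= y -> exists2 al, 0 <= al <= 1 & (1 - al) * x + al * y = c.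
Proof.
move=> /andP[xc cy]; have [xy|xy] := eqVneq x y.
  by exists 0; [rewrite lexx ler01 | move: cy; rewrite -xy; lra].
have yx_gt0 : 0 < y - x by rewrite subr_gt0 lt_neqAle xy (le_trans xc cy).
exists ((c - x) / (y - x)); last by field; rewrite gt_eqF.
by rewrite divr_ge0 ?subr_ge0 ?(le_trans xc cy) //= (ler_pdivrMr _ _ yx_gt0) mul1r lerD2r.
Qed.

Lemma minimizers_setU_setI (R : realType) (T : finType) (f : {set T} -> R) (A B : {set T}) :
  f (A :|: B) + f (A :&: B) <= f A + f B ->
  (forall K, f A <= f K) -> (forall K, f B <= f K) ->
  (forall K, f (A :|: B) <= f K) /\ (forall K, f (A :&: B) <= f K).
Proof.
move=> fUI A_min B_min; have := A_min (A :|: B); have := B_min (A :&: B).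
by split=> K; [apply: le_trans (A_min K) | apply: le_trans (B_min K)]; lra.
Qed.

Lemma ind_le (R : realType) (b1 b2 : bool) : (b1 -> b2) -> ind R b1 <= ind R b2.
Proof. by rewrite /ind; case: b1; case: b2 => // /(_ isT). Qed.

Lemma ind_bound (R : realType) (b : bool) : 0 <= ind R b <= 1.
Proof. by rewrite /ind; case: b; rewrite lexx ler01. Qed.

Lemma sum_ind (R : realType) (V : finType) (P : {set V}) :
  \sum_(v : V) ind R (v \in P) = #|P|%:R.
Proof. by rewrite /ind -big_mkcond /= sumr_const. Qed.

Definition support (R : realType) (V : finType) (x : V -> R) : {set V} :=
  [set v | 0 < x v].

Lemma in_support (R : realType) (V : finType) (x : V -> R) v : (v \in support x) = (0 < x v).
Proof. by rewrite inE. Qed.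

Lemma support_residual_proper (R : realType) (V : finType) (x : V -> R) u :
  u \in support x -> support (fun v => x v - x u * ind R (v \in support x)) \proper support x.
Proof.
move=> uP; apply/properP; split; last by exists u; rewrite // in_support uP /ind mulr1 subrr ltxx.
apply/subsetP => v; rewrite in_support; apply: contraTT => vNP.
by rewrite /ind (negbTE vNP) mulr0 subr0 -in_support.
Qed.

Definition ind_mix (R : realType) (al : R) (b1 b2 : bool) : R :=
  (1 - al) * ind R b1 + al * ind R b2.

Lemma ind_mix_bound (R : realType) (al : R) b1 b2 : 0 <= al <= 1 -> 0 <= ind_mix al b1 b2 <= 1.
Proof.
move=> /andP[al_ge0 al_le1]; rewrite /ind_mix.
by case/andP: (ind_bound R b1); case/andP: (ind_bound R b2); nra.
Qed.

Lemma ind_mix_le (R : realType) (al : R) (b1 b2 c1 c2 : bool) :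
  0 <= al <= 1 -> (b1 -> c1) -> (b2 -> c2) -> ind_mix al b1 b2 <= ind_mix al c1 c2.
Proof.
move=> /andP[al_ge0 al_le1] /(ind_le R) le1 /(ind_le R) le2.
by rewrite /ind_mix lerD // ler_wpM2l ?subr_ge0.
Qed.

(* With
   a K = |K| and b K = τW - W(K) the line of K is l |-> Φ(K, l) + l τW, so the
   envelope is the Lagrangian dual function of the LP and the active lines at l
   are the minimisers of Φ(·, l). *)
Section LowerEnvelope.
Variables (R : realType) (T : finType) (i0 : T) (a b : T -> R).

Definition line (i : T) (l : R) : R := a i + l * b i.

Definition active (l : R) (i : T) : bool := [forall k, line i l <= line k l].

Definition bottom (l : R) : T := [arg min_(i < i0) line i l]%O.

Definition envelope (l : R) : R := line (bottom l) l.

Definition crossing (i k : T) : R := (a k - a i) / (b i - b k).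

Lemma activeP l i : reflect (forall k, line i l <= line k l) (active l i).
Proof. exact: forallP. Qed.

Lemma active_bottom l : active l (bottom l).
Proof. by apply/activeP; rewrite /bottom; case: arg_minP => // i _ min_i k; exact: min_i. Qed.

Lemma envelope_active l i : active l i -> envelope l = line i l.
Proof.
move=> /activeP i_min; apply/eqP; rewrite eq_le i_min.
by have /activeP -> := active_bottom l.
Qed.

Lemma line_le_crossing i k l : b k < b i -> (line i l <= line k l) = (l <= crossing i k).
Proof.
move=> bki; rewrite /line /crossing ler_pdivlMr ?subr_gt0 //.
by rewrite -[LHS]subr_ge0 -[RHS]subr_ge0; congr (0 <= _); ring.
Qed.

Lemma line_lt_crossing i k l : b k < b i -> (line i l < line k l) = (l < crossing i k).
Proof.
move=> bki; rewrite /line /crossing ltr_pdivlMr ?subr_gt0 //.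
by rewrite -[LHS]subr_gt0 -[RHS]subr_gt0; congr (0 < _); ring.
Qed.

Lemma line_le_shift i k lam l :
  lam <= l -> b i <= b k -> line i lam <= line k lam -> line i l <= line k l.
Proof.
move=> lam_le_l bik; rewrite /line => le_lam.
have : 0 <= (l - lam) * (b k - b i) by rewrite mulr_ge0 ?subr_ge0.
nra.
Qed.

Lemma envelope_max_slope_le0 lam :
  (exists j, b j <= 0) ->
  (forall i k, b k < b i -> lam < crossing i k ->
     exists2 l, lam < l <= crossing i k & envelope l <= envelope lam) ->
  exists2 i, active lam i & b i <= 0.
Proof.
move=> [j bj_le0] right_dense.
have [/existsP[i /andP[]]|no_act] := boolP [exists i, active lam i && (b i <= 0)].
  by exists i.
(* Otherwise the active line i1 of least slope has positive slope and stays
   active up to the first crossing k1 to its right, where the envelope is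
   therefore larger than at lam. *)
pose i1 := [arg min_(i < bottom lam | active lam i) b i]%O.
have [i1_act i1_min] : active lam i1 /\ forall i, active lam i -> b i1 <= b i.
  by rewrite /i1; case: arg_minP => [|i ? min_i]; [exact: active_bottom | split].
have bi1_gt0 : 0 < b i1.
  by rewrite ltNge; apply: contra no_act => ?; apply/existsP; exists i1; rewrite i1_act.
have crossing_gt k : b k < b i1 -> lam < crossing i1 k.
  move=> bk; rewrite -line_lt_crossing //.
  have : ~~ active lam k by apply/negP => /i1_min; rewrite leNgt bk.
  move=> /forallPn[k']; rewrite -ltNge.
  exact: le_lt_trans (activeP _ _ i1_act k').
pose k1 := [arg min_(k < j | b k < b i1) crossing i1 k]%O.
have [k1_lt k1_min] : b k1 < b i1 /\ forall k, b k < b i1 -> crossing i1 k1 <= crossing i1 k.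
  by rewrite /k1; case: arg_minP => [|k ? min_k]; [exact: le_lt_trans bi1_gt0 | split].
have [l /andP[lam_lt_l l_le] env_l] := right_dense i1 k1 k1_lt (crossing_gt k1 k1_lt).
have i1_act_l : active l i1.
  apply/activeP => k; have [bk_lt|bk_ge] := ltP (b k) (b i1).
    by rewrite line_le_crossing // (le_trans l_le (k1_min k bk_lt)).
  exact: line_le_shift (ltW lam_lt_l) bk_ge (activeP _ _ i1_act k).
move: env_l; rewrite (envelope_active i1_act_l) (envelope_active i1_act).
by rewrite /line lerD2l ler_pM2r // leNgt lam_lt_l.
Qed.

End LowerEnvelope.

Section Saddle.
Variables (R : realType) (T : finType) (a b : T -> R).

Lemma line_oppr i l : line a (fun k => - b k) i l = line a b i (- l).
Proof. by rewrite /line mulrN mulNr. Qed.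

Lemma active_oppr l i : active a (fun k => - b k) l i = active a b (- l) i.
Proof. by apply: eq_forallb => k; rewrite !line_oppr. Qed.

Lemma envelope_oppr (i0 : T) l : envelope i0 a (fun k => - b k) l = envelope i0 a b (- l).
Proof.
have := active_bottom i0 a (fun k => - b k) l.
by rewrite active_oppr => /(envelope_active i0) ->; rewrite /envelope line_oppr.
Qed.

Lemma crossing_oppr i k : crossing a (fun k => - b k) i k = - crossing a b i k.
Proof. by rewrite /crossing -opprD invrN mulrN. Qed.

Lemma envelope_max_slope_ge0 (i0 : T) lam :
  (exists j, 0 <= b j) ->
  (forall i k, b i < b k -> crossing a b i k < lam ->
     exists2 l, crossing a b i k <= l < lam & envelope i0 a b l <= envelope i0 a b lam) ->
  exists2 i, active a b lam i & 0 <= b i.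
Proof.
move=> [j bj_ge0] left_dense.
have [i] : exists2 i, active a (fun k => - b k) (- lam) i & - b i <= 0.
  apply: (envelope_max_slope_le0 (i0 := i0)) => [|i k]; first by exists j; rewrite oppr_le0.
  rewrite ltrN2 crossing_oppr ltrN2 => bik /(left_dense _ _ bik)[l /andP[cl llam] env_l].
  by exists (- l); rewrite ?ltrN2 ?lerN2 ?cl ?llam // !envelope_oppr !opprK.
by rewrite active_oppr opprK oppr_le0; exists i.
Qed.

Lemma envelope_saddle :
  (exists j, b j <= 0) ->
  exists lam, [/\ 0 <= lam, exists2 i, active a b lam i & b i <= 0
            & lam = 0 \/ exists2 k, active a b lam k & 0 <= b k].
Proof.
move=> [i0 bi0_le0].
have [/existsP[j bj_ge0]|no_nonneg] := boolP [exists k, 0 <= b k]; last first.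
  exists 0; split=> //; last by left.
  exists (bottom i0 a b 0); first exact: active_bottom.
  by move/existsPn/(_ (bottom i0 a b 0)): no_nonneg; rewrite -ltNge => /ltW.
(* The envelope breaks only at crossings, so maximise it over the crossings clipped at 0. *)
pose cand (p : T * T) := Num.max 0 (crossing a b p.1 p.2).
set lam := cand [arg max_(p > (i0, i0)) envelope i0 a b (cand p)]%O.
have lam_max q : envelope i0 a b (cand q) <= envelope i0 a b lam.
  by rewrite /lam; case: arg_maxP => // p _; apply.
have lam_ge0 : 0 <= lam by rewrite le_max lexx.
exists lam; split=> //.
  apply: (envelope_max_slope_le0 (i0 := i0)) => [|i k bki lt_cross]; first by exists i0.
  exists (cand (i, k)); last exact: lam_max.
  by rewrite /cand max_r ?lt_cross ?lexx // (le_trans lam_ge0 (ltW lt_cross)).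
move: lam_ge0; rewrite le_eqVlt => /orP[/eqP <-|lam_gt0]; [by left | right].
apply: (envelope_max_slope_ge0 (i0 := i0)) => [|i k bik cross_lt]; first by exists j.
exists (cand (i, k)); last exact: lam_max.
by rewrite /cand le_max lexx orbT gt_max lam_gt0 cross_lt.
Qed.

End Saddle.

Section Hypergraph.
Variables (R : realType) (V : finType) (E : {set {set V}}) (w : {set V} -> R).
Hypothesis w_ge0 : forall e, e \in E -> 0 <= w e.

Lemma WK_ind (K : {set V}) : WK E w K = \sum_(e in E) w e * ind R (e \subset K).
Proof.
rewrite /WK big_mkcondr /=; apply: eq_bigr => e _.
by rewrite /ind; case: (e \subset K); rewrite ?mulr1 ?mulr0.
Qed.

Lemma WK_setT : WK E w setT = totW E w.
Proof. by apply: eq_bigl => e; rewrite subsetT andbT. Qed.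

Lemma WK_subset (A B : {set V}) : A \subset B -> WK E w A <= WK E w B.
Proof.
move=> AB; rewrite !WK_ind; apply: ler_sum => e eE.
by rewrite ler_wpM2l ?w_ge0 // ind_le // => /subset_trans; apply.
Qed.

Lemma WK_supermodular (A B : {set V}) :
  WK E w A + WK E w B <= WK E w (A :|: B) + WK E w (A :&: B).
Proof.
rewrite !WK_ind -!big_split /=; apply: ler_sum => e eE.
rewrite -!mulrDr ler_wpM2l ?w_ge0 // subsetI.
have : (e \subset A) || (e \subset B) -> e \subset A :|: B.
  by case/orP => /subset_trans; apply; rewrite (subsetUl, subsetUr).
rewrite /ind; case: (e \subset A); case: (e \subset B); case: (e \subset A :|: B) => //= covU;
  by [lra | move/(_ isT): covU].
Qed.

Lemma Phi_submodular lam (A B : {set V}) : 0 <= lam ->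
  Phi E w (A :|: B) lam + Phi E w (A :&: B) lam <= Phi E w A lam + Phi E w B lam.
Proof.
move=> lam_ge0; have := ler_wpM2l lam_ge0 (WK_supermodular A B).
have : #|A :|: B|%:R + #|A :&: B|%:R = #|A|%:R + #|B|%:R :> R by rewrite -!natrD cardsUI.
rewrite /Phi; lra.
Qed.

Definition lagrangian (lam : R) (x : V -> R) (z : {set V} -> R) : R :=
  \sum_(v : V) x v - lam * \sum_(e in E) w e * z e.

Lemma lagrangian_split lam x z x1 z1 x2 z2 :
  (forall v, x v = x1 v + x2 v) -> (forall e, z e = z1 e + z2 e) ->
  lagrangian lam x z = lagrangian lam x1 z1 + lagrangian lam x2 z2.
Proof.
move=> xD zD; rewrite /lagrangian (eq_bigr _ (fun v _ => xD v)) big_split /=.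
rewrite (eq_bigr (fun e => w e * z1 e + w e * z2 e)) ?big_split /=; first ring.
by move=> e _; rewrite zD mulrDr.
Qed.

Lemma ler_lagrangian lam x1 z1 x2 z2 : 0 <= lam ->
  (forall v, x1 v <= x2 v) -> (forall e, e \in E -> z2 e <= z1 e) ->
  lagrangian lam x1 z1 <= lagrangian lam x2 z2.
Proof.
move=> lam_ge0 x12 z21; rewrite /lagrangian lerB ?ler_sum //.
by rewrite ler_wpM2l // ler_sum // => e eE; rewrite ler_wpM2l ?w_ge0 ?z21.
Qed.

Lemma lagrangian_ind lam c (P : {set V}) :
  lagrangian lam (fun v => c * ind R (v \in P)) (fun e => c * ind R (e \subset P))
  = c * Phi E w P lam.
Proof.
rewrite /lagrangian /Phi WK_ind -mulr_sumr sum_ind.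
rewrite (eq_bigr (fun e => c * (w e * ind R (e \subset P)))) -?mulr_sumr; first ring.
by move=> e _; rewrite mulrCA.
Qed.

Definition scaled_feasible (c : R) (x : V -> R) (z : {set V} -> R) : Prop :=
  [/\ forall v, 0 <= x v <= c, forall e, e \in E -> z e <= c
    & forall e, e \in E -> forall v, v \in e -> z e <= x v].

Lemma edge_le0_off_support c x z e : scaled_feasible c x z ->
  e \in E -> ~~ (e \subset support x) -> z e <= 0.
Proof.
by case=> _ _ z_le_x eE /subsetPn[v ve]; rewrite in_support -leNgt; apply/le_trans/z_le_x.
Qed.

Lemma residual_feasible c s x z : scaled_feasible c x z -> s <= c ->
  (forall v, v \in support x -> s <= x v) ->
  scaled_feasible (c - s) (fun v => x v - s * ind R (v \in support x))
                          (fun e => z e - s * ind R (e \subset support x)).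
Proof.
move=> feas s_le_c s_le_x; have [x_bnd z_le_c z_le_x] := feas.
have x'_bnd v : 0 <= x v - s * ind R (v \in support x) <= c - s.
  have /andP[x_ge0 x_le_c] := x_bnd v; rewrite /ind; case: ifP => [vP|/negbT].
    by rewrite mulr1 subr_ge0 s_le_x // lerD2r.
  by rewrite in_support -leNgt mulr0 subr0 x_ge0 => /le_trans->; rewrite ?subr_ge0.
split=> // [e eE|e eE v ve]; rewrite /ind; case: ifP => [eP|/negbT eP].
- by rewrite mulr1 lerD2r z_le_c.
- by rewrite mulr0 subr0 (le_trans (edge_le0_off_support feas eE eP)) // subr_ge0.
- by rewrite (subsetP eP v ve) !mulr1 lerD2r z_le_x.
- rewrite mulr0 subr0 (le_trans (edge_le0_off_support feas eE eP)) //.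
  by case/andP: (x'_bnd v).
Qed.

Lemma lagrangian_ge_min lam m c x z : 0 <= lam -> (forall K, m <= Phi E w K lam) ->
  0 <= c -> scaled_feasible c x z -> c * m <= lagrangian lam x z.
Proof.
move=> lam_ge0 m_le; have [n] := ubnP #|support x|.
elim: n => // n IH in c x z *; rewrite ltnS => supp_n c_ge0 feas.
have [P0|[v0 v0P]] := set_0Vmem (support x).
  apply: le_trans (ler_wpM2l c_ge0 (m_le set0)) _; rewrite -lagrangian_ind.
  have [x_bnd z_le_c _] := feas.
  apply: ler_lagrangian => // [v|e eE]; first by rewrite in_set0 mulr0; case/andP: (x_bnd v).
  rewrite /ind; case: ifP => [_|/negbT]; first by rewrite mulr1 z_le_c.
  by rewrite mulr0 -P0; apply: edge_le0_off_support feas eE.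
(* Peel off the lowest level set: x = x u * 1_(support x) + x', with x' of smaller support. *)
pose u := [arg min_(v < v0 in support x) x v]%O.
have [uP u_min] : u \in support x /\ forall v, v \in support x -> x u <= x v.
  by rewrite /u; case: arg_minP => // v ? min_v; split.
have xu_gt0 : 0 < x u by rewrite -in_support.
have xu_le_c : x u <= c by case: feas => /(_ u)/andP[].
pose x' v := x v - x u * ind R (v \in support x).
pose z' e := z e - x u * ind R (e \subset support x).
have -> : lagrangian lam x z = x u * Phi E w (support x) lam + lagrangian lam x' z'.
  by rewrite -lagrangian_ind; apply: lagrangian_split => [v|e]; rewrite addrC subrK.
have supp'_n : (#|support x'| < n)%N.
  exact: leq_trans (proper_card (support_residual_proper uP)) supp_n.
have := IH (c - x u) x' z' supp'_n; rewrite subr_ge0.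
move=> /(_ xu_le_c (residual_feasible feas xu_le_c u_min)).
have := ler_wpM2l (ltW xu_gt0) (m_le (support x)); lra.
Qed.

Lemma sum_ind_mix_edges al (Sm Sp : {set V}) :
  \sum_(e in E) w e * ind_mix al (e \subset Sm) (e \subset Sp)
  = (1 - al) * WK E w Sm + al * WK E w Sp.
Proof.
rewrite !WK_ind !mulr_sumr -big_split /=.
by apply: eq_bigr => e _; rewrite /ind_mix; ring.
Qed.

Lemma lagrangian_ind_mix lam al (Sm Sp : {set V}) :
  lagrangian lam (fun v => ind_mix al (v \in Sm) (v \in Sp))
                 (fun e => ind_mix al (e \subset Sm) (e \subset Sp))
  = (1 - al) * Phi E w Sm lam + al * Phi E w Sp lam.
Proof. by rewrite -!lagrangian_ind; apply: lagrangian_split. Qed.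

Lemma ind_mix_feasible tau al (Sm Sp : {set V}) : 0 <= al <= 1 ->
  tau * totW E w <= (1 - al) * WK E w Sm + al * WK E w Sp ->
  lp_feasible E w tau (fun v => ind_mix al (v \in Sm) (v \in Sp))
                      (fun e => ind_mix al (e \subset Sm) (e \subset Sp)).
Proof.
move=> al01 x0_le; split=> [e eE v ve|||e _]; rewrite ?sum_ind_mix_edges //.
- by apply: ind_mix_le => // /subsetP/(_ v ve).
- by move=> v; apply: ind_mix_bound.
- exact: ind_mix_bound.
Qed.

Lemma ind_mix_optimal tau lam al (Sm Sp : {set V}) : 0 <= lam ->
  (forall K, Phi E w Sm lam <= Phi E w K lam) ->
  (forall K, Phi E w Sp lam <= Phi E w K lam) ->
  0 <= al <= 1 ->
  tau * totW E w <= (1 - al) * WK E w Sm + al * WK E w Sp ->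
  lam = 0 \/ (1 - al) * WK E w Sm + al * WK E w Sp = tau * totW E w ->
  lp_optimal E w tau (fun v => ind_mix al (v \in Sm) (v \in Sp))
                     (fun e => ind_mix al (e \subset Sm) (e \subset Sp)).
Proof.
move=> lam_ge0 Sm_min Sp_min al01 x0_le slack.
split=> [|x z [z_le_x x0_le_z x_bnd z_bnd]]; first exact: ind_mix_feasible.
have z_le1 e : e \in E -> z e <= 1 by case/z_bnd/andP.
have Sp_Sm : Phi E w Sp lam = Phi E w Sm lam by apply/eqP; rewrite eq_le Sp_min Sm_min.
have := lagrangian_ind_mix lam al Sm Sp.
rewrite Sp_Sm -mulrDl subrK mul1r /lagrangian sum_ind_mix_edges.
have := lagrangian_ge_min lam_ge0 Sm_min ler01 (And3 x_bnd z_le1 z_le_x).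
rewrite mul1r /lagrangian; have := ler_wpM2l lam_ge0 x0_le_z.
by case: slack => [->|->]; lra.
Qed.

Lemma active_Phi_min (x0 lam : R) (K : {set V}) :
  active (fun K : {set V} => #|K|%:R) (fun K => x0 - WK E w K) lam K ->
  forall K', Phi E w K lam <= Phi E w K' lam.
Proof. by move=> /activeP K_min K'; have := K_min K'; rewrite /line /Phi; lra. Qed.

End Hypergraph.

Theorem lemma4 (R : realType) (V : finType) (E : {set {set V}}) (w : {set V} -> R)
  (tau : R) :
  (forall e, e \in E -> 0 <= w e) ->
  0 <= tau <= 1 ->
  exists (lam : R) (Sm Sp : {set V}),
    [/\ 0 <= lam, Sm \subset Sp,
        (forall K : {set V}, Phi E w Sm lam <= Phi E w K lam),
        (forall K : {set V}, Phi E w Sp lam <= Phi E w K lam) &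
        exists alpha : R, 0 <= alpha <= 1 /\
          let xs := fun v : V => (1 - alpha) * ind R (v \in Sm) + alpha * ind R (v \in Sp) in
          let zs := fun e : {set V} =>
            (1 - alpha) * ind R (e \subset Sm) + alpha * ind R (e \subset Sp) in
          lp_optimal E w tau xs zs /\ tau * totW E w <= \sum_(e in E) w e * zs e].
Proof.
move=> w_ge0 /andP[_ tau_le1]; set x0 := tau * totW E w.
pose a (K : {set V}) : R := #|K|%:R; pose b K := x0 - WK E w K.
have bT_le0 : b setT <= 0.
  by rewrite subr_le0 WK_setT ler_piMl // sumr_ge0.
have [lam [lam_ge0 [K2 K2_act K2_ge] K1_spec]] :=
  envelope_saddle a (ex_intro (fun K => b K <= 0) setT bT_le0).
have [K1 K1_act K1_le] : exists2 K1, active a b lam K1 & lam = 0 \/ WK E w K1 <= x0.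
  case: K1_spec => [lam0|[K1 K1_act]]; first by exists K2 => //; left.
  by rewrite subr_ge0 => W1; exists K1 => //; right.
have [SU_min SI_min] := minimizers_setU_setI (Phi_submodular w_ge0 K1 K2 lam_ge0)
  (active_Phi_min K1_act) (active_Phi_min K2_act).
set Sm := K1 :&: K2 in SI_min *; set Sp := K1 :|: K2 in SU_min *.
have Sm_le : WK E w Sm <= WK E w K1 := WK_subset w_ge0 (subsetIl _ _).
have Sp_ge : WK E w K2 <= WK E w Sp := WK_subset w_ge0 (subsetUr _ _).
have SmSp : Sm \subset Sp := subset_trans (subsetIl _ _) (subsetUl _ _).
have mix_bnd : WK E w Sm <= Num.max (WK E w Sm) x0 <= WK E w Sp.
  by rewrite le_max lexx ge_max WK_subset //= (le_trans _ Sp_ge) // -subr_le0.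
have [al al01 mixE] := convex_interval mix_bnd.
have opt : lp_optimal E w tau (fun v => ind_mix al (v \in Sm) (v \in Sp))
                              (fun e => ind_mix al (e \subset Sm) (e \subset Sp)).
  apply: ind_mix_optimal SI_min SU_min al01 _ _ => //; rewrite mixE.
    by rewrite le_max lexx orbT.
  by case: K1_le => [->|W1]; [left | right; rewrite max_r // (le_trans Sm_le W1)].
exists lam, Sm, Sp; split=> //.
by exists al; split=> //; split=> //; case: opt => -[].
Qed.
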